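(* Let $A$ be an abelian group of order $2n$ and let $G=Dic_{4n}(A)$ be the generalized dicyclic group induced by $A$. Then: \begin{enumerate} \item If $A$ is not isomorphic to $\mathbb{Z}_2^m\times\mathbb{Z}_4$ for any $m\in\mathbb{N}$, then $\mathcal{CD}(G)$ is a chain of length $0$; namely $\mathcal{CD}(G)=\{G\}$ if $\exp(A)=2$, and $\mathcal{CD}(G)=\{A\}$ if $\exp(A)\neq 2$. \item If $A\cong\mathbb{Z}_2^m\times\mathbb{Z}_4$ for some $m\in\mathbb{N}$, then $\mathcal{CD}(G)$ is a quasi-antichain of width $3$, namely the set of all subgroups $H$ with $Z(G)\le H\le G$. \end{enumerate}
   Context: Here $\mathbb{N}=\{0,1,2,\dots\}$. For an abelian group $A$ of order $2n$, the generalized dicyclic group induced by $A$ is $Dic_{4n}(A)=\langle A,x\mid x^4=1,\ x^2\in A\setminus\{1\},\ x^{-1}ax=a^{-1}\ \forall a\in A\rangle$ (a group of order $4n$ containing $A$ as a subgroup of index $2$). For a finite group $G$ and $H\le G$, $m_G(H)=|H|\,|C_G(H)|$, $m^*(G)=\max\{m_G(H)\mid H\le G\}$, and the Chermak-Delgado lattice is $\mathcal{CD}(G)=\{H\le G\mid m_G(H)=m^*(G)\}$. A chain of length $0$ is a one-element lattice. A lattice is a quasi-antichain of width $w$ if it consists of a least element, a greatest element, and $w$ further pairwise incomparable elements. *)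

From HB Require Import structures.
From mathcomp Require Import all_boot all_fingroup all_solvable all_algebra.
Set Implicit Arguments.
Unset Strict Implicit.
Unset Printing Implicit Defensive.
Local Open Scope group_scope.

Fixpoint Z2m_Z4 (m : nat) : finGroupType :=
  if m is k.+1 then (('I_2 : finGroupType) * Z2m_Z4 k)%type : finGroupType
  else ('I_4 : finGroupType).

Section CD.
Variable gT : finGroupType.

Definition mCD (G H : {set gT}) : nat := (#|H| * #|'C_G(H)|)%N.

Definition mstarCD (G : {set gT}) : nat :=
  \max_(H : {group gT} | H \subset G) mCD G H.

Definition CDlattice (G : {set gT}) : {set {group gT}} :=
  [set H : {group gT} | (H \subset G) && (mCD G H == mstarCD G)].

(* a lattice of subgroups (ordered by inclusion) is a chain of length 0 iff it
   has exactly one element *)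
Definition chain_length0 (S : {set {group gT}}) : Prop := #|S| = 1%N.

Definition quasi_antichain (S : {set {group gT}}) (w : nat) : Prop :=
  exists L U : {group gT},
    [/\ L \in S, U \in S,
        (forall H : {group gT}, H \in S -> (L \subset H) && (H \subset U)),
        #|S :\ L :\ U| = w &
        (forall H K : {group gT}, H \in S :\ L :\ U -> K \in S :\ L :\ U ->
            H \subset K -> H = K)].

End CD.

From HB Require Import structures.
From mathcomp Require Import all_boot all_fingroup all_solvable all_algebra.
From mathcomp Require Import zify.
Set Implicit Arguments.
Unset Strict Implicit.
Unset Printing Implicit Defensive.
Local Open Scope group_scope.

(* Put W = C_A(x).  An element g of G outside A lies in A x (A has index 2),
   so it inverts A just as x does; hence W = {a in A | a^2 = 1}, W is central
   in G, and g centralizes a in A only if a lies in W.  Bounding |C_G(H)|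
   according to whether H lies in W, in A, or not in A gives m_G(H) <= |A|^2
   as soon as |A : W| >= 2, with equality only for H = A or, when
   |A : W| = 2, for W <= H.  If W = A then G is abelian and CD(G) = {G}.
   Comparing abelian types, |A : W| = 2 exactly when A is Z_2^m x Z_4.  Then
   Z(G) = W and |G : W| = 4; a subgroup strictly between W and G has order
   2|W| and is abelian (W is central of index 2 in it), so it lies in CD(G),
   and these subgroups are A, C_G(x) and C_G(a x) for any a in A \ W. *)

Lemma subset_card_eq (T : finType) (B C : {set T}) :
  B \subset C -> (#|C| <= #|B|)%N -> B = C.
Proof. by move=> sBC leCB; apply/eqP; rewrite eqEcard sBC. Qed.

Section Index.
Variable gT : finGroupType.
Implicit Types G H K L P : {group gT}.

Lemma mulgV_index2 G H a b : H \subset G -> #|G : H| = 2 ->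
  a \in G :\: H -> b \in G :\: H -> a * b^-1 \in H.
Proof. by move=> sHG iGH Ga Gb; rewrite -mem_rcoset (rcoset_index2 sHG iGH Gb). Qed.

Lemma card_proper_double K L : K \proper L -> (2 * #|K| <= #|L|)%N.
Proof.
case/andP=> sKL nsLK; rewrite -(Lagrange sKL) mulnC leq_pmul2l ?cardG_gt0 //.
by rewrite indexg_gt1.
Qed.

Lemma card_between_index4 K L P :
  K \subset L -> L \subset P -> #|P| = (4 * #|K|)%N ->
  [\/ L :=: K, #|L| = (2 * #|K|)%N | L :=: P].
Proof.
move=> sKL sLP cardP.
have iPK : (#|P : L| * #|L : K|)%N = 4.
  by rewrite Lagrange_index // -divgS ?(subset_trans sKL) // cardP mulnK.
have cardL : #|L| = (#|K| * #|L : K|)%N by rewrite Lagrange.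
have : #|L : K| %| 4 by rewrite -iPK dvdn_mull.
rewrite dvdn_divisors // !inE /=.
case/or3P=> /eqP iLK.
- by constructor 1; apply/eqP; rewrite eqEsubset sKL -indexg_eq1 iLK.
- by constructor 2; rewrite cardL iLK mulnC.
- constructor 3; apply/eqP; rewrite eqEsubset sLP -indexg_eq1.
  by move: iPK; rewrite iLK; case: #|P : L| => [|[|]].
Qed.

Lemma abelian_center_prime_index K H :
  K \subset 'Z(H) -> prime #|H : K| -> abelian H.
Proof.
move=> sKZ pHK; apply: (cyclic_factor_abelian sKZ); apply: prime_cyclic.
have /andP[_ nKH] := sub_center_normal sKZ.
by rewrite card_quotient.
Qed.

Lemma exponent_eq2 K : K :!=: 1 -> (exponent K == 2) = (K \subset 'Ldiv_2(K)).
Proof.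
rewrite sub_Ldiv trivg_exponent => ntK; apply/eqP/idP => [-> // | dv2].
by move: dv2 ntK; rewrite dvdn_divisors // !inE => /orP[] /eqP->.
Qed.

End Index.

Lemma prod_type24 (s : seq nat) : all [pred i | (i == 2) || (i == 4)] s ->
  (\prod_(i <- s) i = 2 ^ (size s + count_mem 4 s))%N.
Proof.
elim: s => [|i s IH] /=; first by rewrite big_nil.
case/andP=> /orP[] /eqP-> /IH; rewrite big_cons => ->.
  by rewrite -expnS addSn.
by rewrite add1n addnS addSn !expnS mulnA.
Qed.

Lemma sorted_type24 (s : seq nat) :
  sorted geq s -> all [pred i | (i == 2) || (i == 4)] s ->
  (\prod_(i <- s) i = 2 ^ (size s).+1)%N -> s = 4 :: nseq (size s).-1 2.
Proof.
move=> srt s24; rewrite prod_type24 // -[(size s).+1]addn1.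
move=> /(expnI (ltnSn 1))/eqP; rewrite eqn_add2l => /eqP count4.
case: s srt s24 count4 => // i t srt /andP[i24 t24].
have le_t_i : all (geq i) t := order_path_min (rev_trans leq_trans) srt.
case/orP: i24 le_t_i => /eqP-> le_t_i /=.
  have /count_memPn-> // : 4 \notin t by apply/negP => /(allP le_t_i).
move=> /eqP; rewrite eqSS => /eqP/count_memPn not4t; congr (_ :: _).
apply/all_pred1P/allP => j tj; have /orP[] // := allP t24 j tj.
by move/eqP=> j4; rewrite -j4 tj in not4t.
Qed.

Lemma card_Z2m_Z4 m : #|[set: Z2m_Z4 m]| = (2 ^ m.+2)%N.
Proof.
elim: m => [|m IH]; first by rewrite cardsT card_ord.
by rewrite cardsT /= card_prod card_ord -cardsT IH expnS.
Qed.

Lemma abelian_Z2m_Z4 m : abelian [set: Z2m_Z4 m].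
Proof.
elim: m => [|m IH]; first exact: Zp_abelian.
apply/centsP => -[a1 a2] _ [b1 b2] _; congr pair.
  by apply: (centsP (Zp_abelian 1)); rewrite inE.
by apply: (centsP IH); rewrite inE.
Qed.

Lemma card_Ldiv2_Z2m_Z4 m : #|'Ldiv_2([set: Z2m_Z4 m])| = (2 ^ m.+1)%N.
Proof.
rewrite setTI; elim: m => [|m IH].
  suff -> : 'Ldiv_2() = [set @Ordinal 4 0 isT; @Ordinal 4 2 isT] by rewrite cards2.
  by apply/setP => -[[|[|[|[|k]]]] lt_k4]; rewrite !inE.
have -> : 'Ldiv_2() = setX [set: 'I_2] 'Ldiv_2() :> {set Z2m_Z4 m.+1}.
  apply/setP => -[a b]; rewrite !inE /= !expgS !expg0 !mulg1.
  by rewrite -[_ == 1]/((a * a, b * b) == (1, 1)) xpair_eqE; case: a => -[|[|]].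
by rewrite cardsX cardsT card_ord IH -expnS.
Qed.

Section AbelianType.
Variable gT : finGroupType.
Implicit Types K : {group gT}.

Lemma abelian_type_dvdn_exponent K m : abelian K ->
  m \in abelian_type K -> m %| exponent K.
Proof.
move=> cKK; have [b defK <-] := abelian_structure cKK; case/mapP => y b_y ->.
apply: dvdn_exponent; rewrite -(bigdprodWY defK); have [b1 b2] := splitPr b_y.
by rewrite big_cat big_cons /= mem_gen // setUCA inE cycle_id.
Qed.

Lemma abelian_type_index2_Ldiv2 K : abelian K -> #|K| = (2 * #|'Ldiv_2(K)|)%N ->
  abelian_type K = 4 :: nseq (logn 2 #|K|).-2 2.
Proof.
move=> cKK cardK; pose L := Group (group_Ldiv 2 cKK).
have sLK : L \subset K := subsetIl _ _.
have iKL : #|K : L| = 2 by rewrite -divgS // cardK mulnK // (cardG_gt0 L).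
have expK : exponent K %| 4.
  apply/exponentP => a Ka; suff /LdivP[_] : a ^+ 2 \in L by rewrite -expgM.
  have [La | notLa] := boolP (a \in L); first exact: groupX.
  rewrite expgS expg1 -{2}[a]invgK.
  by apply: (mulgV_index2 sLK iKL); rewrite in_setD ?groupV notLa Ka.
have pK : 2.-group K by rewrite -pnat_exponent (pnat_dvd expK).
have rankK : 'r(K) = logn 2 #|L|.
  rewrite (rank_abelian_pgroup pK cKK).
  by rewrite (OhmEabelian pK (abelianS (Ohm_sub 1 K) cKK)) expn1.
have cardL : #|L| = (2 ^ 'r(K))%N by rewrite rankK -(card_pgroup (pgroupS sLK pK)).
rewrite cardK cardL -expnS pfactorK // -(size_abelian_type cKK).
have [b defK typeK] := abelian_structure cKK.
apply: sorted_type24; first exact: abelian_type_sorted.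
  apply/allP => m type_m; have gt1m := allP (abelian_type_gt1 K) m type_m.
  have := dvdn_trans (abelian_type_dvdn_exponent cKK type_m) expK.
  by case: m {type_m} gt1m => [|[|[|[|[|]]]]].
rewrite (size_abelian_type cKK) -typeK big_map (bigdprod_card defK).
by rewrite cardK cardL expnS.
Qed.

End AbelianType.

Lemma index2_Ldiv2_isog_Z2m_Z4 (gT : finGroupType) (K : {group gT}) : abelian K ->
  #|K| = (2 * #|'Ldiv_2(K)|)%N <-> exists m, K \isog [set: Z2m_Z4 m].
Proof.
move=> cKK; split=> [cardK | [m /isogP[f injf fK]]].
  exists (logn 2 #|K|).-2.
  rewrite (eq_abelian_type_isog cKK (abelian_Z2m_Z4 _)).
  have cardT : #|[set: Z2m_Z4 (logn 2 #|K|).-2]| =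
      (2 * #|'Ldiv_2([set: Z2m_Z4 (logn 2 #|K|).-2])|)%N.
    by rewrite card_Z2m_Z4 card_Ldiv2_Z2m_Z4 -expnS.
  rewrite (abelian_type_index2_Ldiv2 cKK cardK).
  rewrite (abelian_type_index2_Ldiv2 (abelian_Z2m_Z4 _) cardT).
  by rewrite card_Z2m_Z4 pfactorK.
rewrite -(card_injm injf (subxx _)) -(card_injm injf (subsetIl _ _)).
rewrite injm_Ldiv // fK.
by rewrite card_Z2m_Z4 card_Ldiv2_Z2m_Z4 expnS.
Qed.

Section ChermakDelgado.
Variable gT : finGroupType.
Implicit Types G H L U : {group gT}.

Lemma mstarCD_eq G H0 V : (forall H, H \subset G -> mCD G H <= V)%N ->
  H0 \subset G -> mCD G H0 = V -> mstarCD G = V.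
Proof.
move=> leV sH0G defV; apply/eqP; rewrite eqn_leq -{2}defV.
rewrite (@leq_bigmax_cond _ _ (fun H => mCD G H) H0 sH0G) andbT.
exact/bigmax_leqP.
Qed.

Lemma CDlattice_abelian G : abelian G -> CDlattice G = [set G].
Proof.
move=> cGG; have CGH H : H \subset G -> 'C_G(H) = G.
  by move=> sHG; apply/setIidPl; rewrite centsC (subset_trans sHG).
have mGH H : H \subset G -> mCD G H = (#|H| * #|G|)%N.
  by move=> /CGH; rewrite /mCD => ->.
have mstarG : mstarCD G = (#|G| * #|G|)%N.
  apply: mstarCD_eq (subxx _) (mGH _ (subxx _)) => H sHG.
  by rewrite mGH // leq_mul2r subset_leq_card ?orbT.
apply/setP => H; rewrite /CDlattice mstarG !inE.
apply/andP/eqP => [[sHG] | ->]; last by rewrite subxx mGH.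
rewrite mGH // eqn_pmul2r ?cardG_gt0 // => /eqP cardH.
by apply/val_inj/subset_card_eq; rewrite ?cardH.
Qed.

Lemma quasi_antichain_interval L U (M : {set {group gT}}) (c : nat) :
  L \subset U ->
  [set H : {group gT} | (L \subset H) && (H \subset U)] :\ L :\ U = M ->
  {in M, forall H : {group gT}, #|H| = c} ->
  quasi_antichain [set H : {group gT} | (L \subset H) && (H \subset U)] #|M|.
Proof.
move=> sLU defM cardM; exists L, U; rewrite defM; split=> //.
- by rewrite inE subxx sLU.
- by rewrite inE subxx sLU.
- by move=> H; rewrite inE.
move=> H K MH MK sHK; apply/val_inj/subset_card_eq => //.
by rewrite (cardM _ MH) (cardM _ MK).
Qed.

End ChermakDelgado.

Section Dicyclic.
Variables (gT : finGroupType) (G A : {group gT}) (x : gT).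
Hypotheses (cAA : abelian A) (sAG : A \subset G) (iAG : #|G : A| = 2).
Hypotheses (Gx : x \in G) (notAx : x \notin A).
Hypothesis conjAx : forall a, a \in A -> a ^ x = a^-1.
Implicit Types H K : {group gT}.

Lemma card_dic : #|G| = (2 * #|A|)%N.
Proof. by rewrite -(Lagrange sAG) iAG mulnC. Qed.

Lemma card_le_double_meet K : K \subset G -> (#|K| <= 2 * #|K :&: A|)%N.
Proof.
move=> sKG; have := mul_cardG K A; have := cardG_gt0 A.
have : (#|(K * A)%g| <= #|G|)%N by rewrite subset_leq_card // mul_subG.
rewrite card_dic; nia.
Qed.

Lemma conj_outA g a : g \in G -> g \notin A -> a \in A -> a ^ g = a^-1.
Proof.
move=> Gg notAg Aa; have Agx : g * x^-1 \in A.
  by apply: (mulgV_index2 sAG iAG); rewrite in_setD ?Gg ?Gx ?notAx ?notAg.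
rewrite -(mulgKV x g) conjgM -(conjAx Aa); congr (_ ^ x).
by apply/conjg_fixP/commgP/(centsP cAA).
Qed.

Lemma cent1_outA g : g \in G -> g \notin A -> 'C_A[g] = 'C_A[x].
Proof.
move=> Gg notAg; apply/setP => a; rewrite !in_setI; case Aa: (a \in A) => //=.
by rewrite !(sameP cent1P commgP) -!conjg_fix conj_outA // conjAx.
Qed.

Lemma cent1A_Ldiv : 'C_A[x] = 'Ldiv_2(A).
Proof.
apply/setP => a; rewrite !in_setI; case Aa: (a \in A) => //=.
rewrite [in RHS]inE (sameP cent1P commgP) -conjg_fix conjAx //.
by rewrite eq_invg_mul expgS expg1.
Qed.

Lemma cent1A_sub_center : 'C_A[x] \subset 'Z(G).
Proof.
apply/subsetP => a Wa; have /subcent1P[Aa _] := Wa.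
apply/centerP; split=> [|g Gg]; first exact: subsetP sAG a Aa.
case Ag: (g \in A); first exact: (centsP cAA).
by move: Wa; rewrite -(cent1_outA Gg (negbT Ag)) => /subcent1P[_ /commute_sym].
Qed.

Lemma cent1A_sub_cent H : H \subset G -> 'C_A[x] \subset 'C_G(H).
Proof.
by move=> sHG; apply: subset_trans cent1A_sub_center (setIS G (centS sHG)).
Qed.

Lemma cent_sub_cent1A H : H \subset 'C_A[x] -> 'C_G(H) = G.
Proof.
move=> sHW; apply/setIidPl; rewrite centsC.
exact: subset_trans sHW (subset_trans cent1A_sub_center (subsetIr _ _)).
Qed.

Lemma cent_outA_meet H : H \subset G -> ~~ (H \subset A) ->
  'C_G(H) :&: A \subset 'C_A[x].
Proof.
move=> sHG /subsetPn[h Hh notAh]; rewrite -(cent1_outA (subsetP sHG h Hh) notAh).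
apply/subsetP => a /setIP[/subcentP[_ cHa] Aa].
by apply/subcent1P; split; last exact/commute_sym/cHa.
Qed.

Lemma cent_sub_A H : ~~ (H :&: A \subset 'C_A[x]) -> 'C_G(H) \subset A.
Proof.
case/subsetPn=> h /setIP[Hh Ah] notWh; apply/subsetP => g /subcentP[Gg cHg].
apply: contraR notWh => notAg; rewrite -(cent1_outA Gg notAg).
by apply/subcent1P; split; last exact: cHg.
Qed.

Lemma card_cent_outA H : H \subset G -> ~~ (H \subset A) ->
  (#|'C_G(H)| <= 2 * #|'C_A[x]|)%N.
Proof.
move=> sHG notAH; apply: leq_trans (card_le_double_meet (subsetIl _ _)) _.
by rewrite leq_mul2l subset_leq_card ?cent_outA_meet ?orbT.
Qed.

Lemma mCD_cases H : H \subset G ->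
  [\/ H \subset 'C_A[x] /\ mCD G H = (2 * #|A| * #|H|)%N,
      H \subset A /\ (mCD G H <= #|A| * #|H|)%N,
      H :&: A \subset 'C_A[x] /\ (mCD G H <= 4 * #|'C_A[x]| * #|H :&: A|)%N
    | (mCD G H <= 2 * #|'C_A[x]| * #|H :&: A|)%N].
Proof.
move=> sHG; rewrite /mCD.
have [sHA | notAH] := boolP (H \subset A).
  have [sHW | notWH] := boolP (H \subset 'C_A[x]).
    by constructor 1; rewrite cent_sub_cent1A // card_dic mulnC.
  constructor 2; split=> //.
  rewrite [X in (X <= _)%N]mulnC leq_mul2r subset_leq_card ?orbT //.
  by apply: cent_sub_A; rewrite (setIidPl sHA).
have leH := card_le_double_meet sHG.
have [sHAW | notWHA] := boolP (H :&: A \subset 'C_A[x]).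
  constructor 3; split=> //.
  by apply: leq_trans (leq_mul leH (card_cent_outA sHG notAH)) _; nia.
constructor 4; have sCW : 'C_G(H) \subset 'C_A[x].
  by rewrite -(setIidPl (cent_sub_A notWHA)) cent_outA_meet.
by apply: leq_trans (leq_mul leH (subset_leq_card sCW)) _; nia.
Qed.

Lemma mCD_le_sq H : (2 * #|'C_A[x]| <= #|A|)%N -> H \subset G ->
  (mCD G H <= #|A| ^ 2)%N.
Proof.
move=> leWA sHG; have leHA := subset_leq_card (subsetIr H A).
case: (mCD_cases sHG) => [[/subset_leq_card leHW ->] | [/subset_leq_card leH] |
  [/subset_leq_card leHAW] | ]; nia.
Qed.

Lemma mCD_eq_sq H : (2 * #|'C_A[x]| <= #|A|)%N -> H \subset G ->
  mCD G H = (#|A| ^ 2)%N ->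
  H :=: A \/ #|A| = (2 * #|'C_A[x]|)%N /\ 'C_A[x] \subset H.
Proof.
move=> leWA sHG mH; have Apos := cardG_gt0 A.
have leHA := subset_leq_card (subsetIr H A).
case: (mCD_cases sHG) => [[sHW] | [sHA] | [sHAW] | ]; rewrite mH => leA.
- have eqA : #|A| = (2 * #|H|)%N.
    by apply/eqP; rewrite -(eqn_pmul2l Apos); apply/eqP; nia.
  have leHW := subset_leq_card sHW.
  have eqHW : H :=: 'C_A[x] by apply: subset_card_eq sHW _; nia.
  by right; rewrite eqHW; split=> //; nia.
- by left; apply: subset_card_eq sHA _; nia.
- have leHAW := subset_leq_card sHAW.
  have eqHAW : H :&: A = 'C_A[x] by apply: subset_card_eq sHAW _; nia.
  by right; split; [nia | rewrite -eqHAW subsetIl].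
have eqHAA : H :&: A = A by apply: subset_card_eq (subsetIr H A) _; nia.
right; split; first nia.
by rewrite (subset_trans (subsetIl A 'C[x])) // -eqHAA subsetIl.
Qed.

Lemma cent1A_proper : (2 * #|'C_A[x]| <= #|A|)%N -> 'C_A[x] \proper A.
Proof.
move=> leWA; rewrite properEcard subsetIl (leq_trans _ leWA) //.
by rewrite ltn_Pmull ?cardG_gt0.
Qed.

Lemma mCD_A : 'C_A[x] \proper A -> mCD G A = (#|A| ^ 2)%N.
Proof.
case/andP=> _ notAW; have CGA : 'C_G(A) = A.
  by apply/eqP; rewrite eqEsubset cent_sub_A ?setIid // subsetI sAG.
by rewrite /mCD CGA.
Qed.

Lemma mstarCD_dic : (2 * #|'C_A[x]| <= #|A|)%N -> mstarCD G = (#|A| ^ 2)%N.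
Proof.
move=> leWA; apply: mstarCD_eq sAG (mCD_A (cent1A_proper leWA)) => H.
exact: mCD_le_sq.
Qed.

Lemma CDlattice_dic_lt : (2 * #|'C_A[x]| < #|A|)%N -> CDlattice G = [set A].
Proof.
move=> ltWA; have leWA := ltnW ltWA.
apply/setP => H; rewrite /CDlattice mstarCD_dic // !inE.
apply/andP/eqP => [[sHG /eqP mH] | ->]; last by rewrite sAG mCD_A ?cent1A_proper.
case: (mCD_eq_sq leWA sHG mH) => [eqHA | [eqWA _]]; first exact: val_inj.
by rewrite eqWA ltnn in ltWA.
Qed.

Lemma abelian_interval_mid H : 'C_A[x] \subset H -> H \subset G ->
  #|H| = (2 * #|'C_A[x]|)%N -> abelian H.
Proof.
move=> sWH sHG cardH; apply: (@abelian_center_prime_index _ 'C_A[x]%G).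
  by rewrite subsetI sWH (subset_trans (cent1A_sub_cent sHG)) ?subsetIr.
by rewrite -divgS // cardH mulnK ?cardG_gt0.
Qed.

Lemma mCD_interval_ge H : #|A| = (2 * #|'C_A[x]|)%N ->
  'C_A[x] \subset H -> H \subset G -> (#|A| ^ 2 <= mCD G H)%N.
Proof.
move=> eqWA sWH sHG; rewrite /mCD eqWA.
have cardG : #|G| = (4 * #|'C_A[x]|)%N by rewrite card_dic eqWA mulnA.
case: (card_between_index4 sWH sHG cardG) => [-> | /= cardH | ->].
- by rewrite cent_sub_cent1A //= cardG expnMn mulnCA.
- have sHC : H \subset 'C_G(H) by rewrite subsetI sHG; apply: abelian_interval_mid.
  by rewrite -mulnn; apply: leq_mul; rewrite -?cardH ?subset_leq_card.
- rewrite cardG expnMn -mulnn mulnA; apply: leq_mul => //.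
  exact: subset_leq_card cent1A_sub_center.
Qed.

Lemma CDlattice_dic_eq : #|A| = (2 * #|'C_A[x]|)%N ->
  CDlattice G = [set H : {group gT} | ('C_A[x] \subset H) && (H \subset G)].
Proof.
move=> eqWA; have leWA : (2 * #|'C_A[x]| <= #|A|)%N by rewrite eqWA.
apply/setP => H; rewrite /CDlattice mstarCD_dic // !inE andbC.
apply/andP/andP => [[/eqP mH sHG] | [sWH sHG]]; split=> //.
  by case: (mCD_eq_sq leWA sHG mH) => [-> | []//]; rewrite subsetIl.
by rewrite eqn_leq mCD_le_sq ?mCD_interval_ge.
Qed.

Lemma center_dic : 'C_A[x] \proper A -> 'Z(G) = 'C_A[x].
Proof.
case/andP=> _ notAW; apply/eqP; rewrite eqEsubset cent1A_sub_center andbT subsetI.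
rewrite (subset_trans (setIS G (centS sAG))) ?cent_sub_A ?setIid //=.
by rewrite sub_cent1; apply: subsetP _ x Gx; rewrite centsC subsetIr.
Qed.

Lemma cent1A_sub_cent1 g : g \in G -> 'C_A[x] \subset 'C_G[g].
Proof.
move=> Gg; have sgG : <[g]> \subset G by rewrite cycle_subG.
by have := cent1A_sub_cent sgG; rewrite cent_cycle.
Qed.

Lemma card_cent1_outA g : g \in G -> g \notin A -> #|'C_G[g]| = (2 * #|'C_A[x]|)%N.
Proof.
move=> Gg notAg; apply/anti_leq/andP; split.
  have sgG : <[g]> \subset G by rewrite cycle_subG.
  by have := card_cent_outA sgG; rewrite cent_cycle cycle_subG; apply.
apply: card_proper_double; rewrite properE cent1A_sub_cent1 //=.
apply/subsetPn; exists g; first exact: subcent1_id.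
by apply: contra notAg => /setIP[].
Qed.

Lemma interval_mid_cent1 H h : 'C_A[x] \subset H -> H \subset G ->
  #|H| = (2 * #|'C_A[x]|)%N -> h \in H -> h \notin A -> H :=: 'C_G[h].
Proof.
move=> sWH sHG cardH Hh notAh; have Gh := subsetP sHG h Hh.
apply: subset_card_eq; last by rewrite card_cent1_outA ?cardH.
rewrite subsetI sHG sub_cent1.
exact: subsetP (abelian_interval_mid sWH sHG cardH) h Hh.
Qed.

Lemma in_interval_mid H : #|A| = (2 * #|'C_A[x]|)%N ->
  (H \in [set K : {group gT} | ('C_A[x] \subset K) && (K \subset G)]
          :\ 'C_A[x]%G :\ G)
    = [&& 'C_A[x] \subset H, H \subset G & #|H| == (2 * #|'C_A[x]|)%N].
Proof.
move=> eqWA; have cardG : #|G| = (4 * #|'C_A[x]|)%N by rewrite card_dic eqWA mulnA.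
rewrite !inE; apply/and4P/and3P => [[nGH nWH sWH sHG] | [sWH sHG /eqP cardH]].
  split=> //; case: (card_between_index4 sWH sHG cardG) => [eqHW | -> // | eqHG].
    by rewrite (val_inj eqHW : H = 'C_A[x]%G) eqxx in nWH.
  by rewrite (val_inj eqHG : H = G) eqxx in nGH.
split=> //; apply/eqP => eqH; rewrite eqH /= in cardH.
  by move/eqP: cardH; rewrite cardG eqn_pmul2r ?cardG_gt0.
by move/eqP: cardH; rewrite -{1}[#|_|]mul1n eqn_pmul2r ?cardG_gt0.
Qed.

Lemma interval_mid_dic a0 : #|A| = (2 * #|'C_A[x]|)%N ->
  a0 \in A -> a0 \notin 'C_A[x] ->
  [set K : {group gT} | ('C_A[x] \subset K) && (K \subset G)] :\ 'C_A[x]%G :\ G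
    = [set A; 'C_G[x]%G; 'C_G[a0 * x]%G].
Proof.
move=> eqWA Aa0 notWa0; have Ga0x : a0 * x \in G by rewrite groupM // (subsetP sAG).
have notAa0x : a0 * x \notin A by rewrite groupMl.
apply/setP => H; rewrite in_interval_mid // !inE -orbA.
apply/and3P/or3P => [[sWH sHG /eqP cardH] | ].
  have [sHA | /subsetPn[h Hh notAh]] := boolP (H \subset A).
    by constructor 1; apply/eqP/val_inj/subset_card_eq; rewrite // cardH eqWA.
  have Agx : h * x^-1 \in A.
    apply: (mulgV_index2 sAG iAG); rewrite in_setD ?Gx ?notAx ?notAh //.
    exact: subsetP sHG h Hh.
  (* As |A : C_A[x]| = 2, h x^-1 lies in C_A[x] or in C_A[x] a0. *)
  have [Wgx | notWgx] := boolP (h * x^-1 \in 'C_A[x]).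
    have defx : x = (h * x^-1)^-1 * h by rewrite invMg invgK mulgKV.
    have Hx : x \in H by rewrite defx groupM ?groupV // (subsetP sWH).
    constructor 2; apply/eqP/val_inj.
    exact: interval_mid_cent1 sWH sHG cardH Hx notAx.
  have iAW : #|A : 'C_A[x]| = 2 by rewrite -divgS ?subsetIl // eqWA mulnK.
  have Wga : (h * x^-1) * a0^-1 \in 'C_A[x].
    apply: (mulgV_index2 (subsetIl _ _) iAW).
      by rewrite in_setD Agx notWgx.
    by rewrite in_setD Aa0 notWa0.
  have defa0x : a0 * x = ((h * x^-1) * a0^-1)^-1 * h.
    by rewrite !invMg !invgK -mulgA mulgKV.
  have Ha0x : a0 * x \in H by rewrite defa0x groupM ?groupV // (subsetP sWH).
  constructor 3; apply/eqP/val_inj.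
  exact: interval_mid_cent1 sWH sHG cardH Ha0x notAa0x.
by case=> /eqP->; split; rewrite ?subsetIl ?eqWA ?cent1A_sub_cent1 ?card_cent1_outA.
Qed.

Lemma card_interval_mid_dic a0 : a0 \in A -> a0 \notin 'C_A[x] ->
  #|[set A; 'C_G[x]%G; 'C_G[a0 * x]%G]| = 3.
Proof.
move=> Aa0 notWa0; have Ga0x : a0 * x \in G by rewrite groupM // (subsetP sAG).
have notAa0x : a0 * x \notin A by rewrite groupMl.
have neACx : (A == 'C_G[x]%G) = false.
  by apply/eqP => eqA; move: (notAx); rewrite eqA /= subcent1_id.
have neACa0x : (A == 'C_G[a0 * x]%G) = false.
  by apply/eqP => eqA; rewrite eqA /= subcent1_id in notAa0x.
have neCC : ('C_G[x]%G == 'C_G[a0 * x]%G) = false.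
  apply/eqP => /(congr1 val)/= eqC; case/negP: notWa0.
  have Ca0x : a0 * x \in 'C_G[x] by rewrite eqC subcent1_id.
  have Ca0 : a0 \in 'C_G[x] by rewrite -(mulgK x a0) groupM ?groupV ?subcent1_id.
  by rewrite in_setI Aa0; case/setIP: Ca0.
rewrite setUC cardsU1 cards2 !inE ![('C_G[a0 * x]%G == _)]eq_sym.
by rewrite neACx neACa0x neCC.
Qed.

Lemma quasi_antichain_dic : #|A| = (2 * #|'C_A[x]|)%N ->
  quasi_antichain [set H : {group gT} | ('C_A[x] \subset H) && (H \subset G)] 3.
Proof.
move=> eqWA; have leWA : (2 * #|'C_A[x]| <= #|A|)%N by rewrite eqWA.
have /properP[_ [a0 Aa0 notWa0]] := cent1A_proper leWA.
rewrite -(card_interval_mid_dic Aa0 notWa0) -(interval_mid_dic eqWA Aa0 notWa0).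
apply: (quasi_antichain_interval (c := 2 * #|'C_A[x]|)) => [|//|H].
  exact: subset_trans (subsetIl _ _) sAG.
by rewrite in_interval_mid // => /and3P[_ _ /eqP].
Qed.

Lemma abelian_dic : 'C_A[x] = A -> abelian G.
Proof.
move=> eqWA; apply: (@abelian_center_prime_index _ A); last by rewrite iAG.
by rewrite -{1}eqWA cent1A_sub_center.
Qed.

Lemma CDlattice_dic_chain : A :!=: 1 -> #|A| != (2 * #|'C_A[x]|)%N ->
  [/\ chain_length0 (CDlattice G),
      exponent A = 2 -> CDlattice G = [set G]
    & exponent A != 2 -> CDlattice G = [set A]].
Proof.
move=> ntA neAW; have expA : (exponent A == 2) = ('C_A[x] == A).
  by rewrite exponent_eq2 // -cent1A_Ldiv eqEsubset subsetIl.
have [eqWA | neWA] := eqVneq 'C_A[x] A.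
  rewrite CDlattice_abelian ?abelian_dic //; split=> [|//|].
    exact: cards1.
  by rewrite expA eqWA eqxx.
have ltWA : (2 * #|'C_A[x]| < #|A|)%N.
  rewrite ltn_neqAle eq_sym neAW card_proper_double // properEneq neWA.
  exact: subsetIl.
rewrite CDlattice_dic_lt //; split=> [|/eqP|//].
  exact: cards1.
by rewrite expA (negPf neWA).
Qed.

Lemma CDlattice_dic_Z2m_Z4 : #|A| = (2 * #|'C_A[x]|)%N ->
  quasi_antichain (CDlattice G) 3 /\
  CDlattice G = [set H : {group gT} | ('Z(G) \subset H) && (H \subset G)].
Proof.
move=> eqWA; have leWA : (2 * #|'C_A[x]| <= #|A|)%N by rewrite eqWA.
rewrite CDlattice_dic_eq // center_dic ?cent1A_proper //.
by split=> //; apply: quasi_antichain_dic.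
Qed.

End Dicyclic.

Theorem theorem3p1 (gT : finGroupType) (G A : {group gT}) (x : gT) (n : nat) :
  abelian A -> #|A| = (2 * n)%N ->
  A \subset G -> #|G| = (4 * n)%N ->
  x \in G -> G = A <*> <[x]> ->
  x ^+ 4 = 1 -> x ^+ 2 \in A -> x ^+ 2 != 1 ->
  (forall a, a \in A -> a ^ x = a^-1) ->
  ((forall m : nat, ~ (A \isog [set: Z2m_Z4 m])) ->
     chain_length0 (CDlattice G) /\
     (exponent A = 2%N -> CDlattice G = [set G]) /\
     (exponent A != 2%N -> CDlattice G = [set A]))
  /\
  ((exists m : nat, A \isog [set: Z2m_Z4 m]) ->
     quasi_antichain (CDlattice G) 3 /\
     CDlattice G = [set H : {group gT} | ('Z(G) \subset H) && (H \subset G)]).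
Proof.
move=> cAA cardA sAG cardG Gx defG _ x2A ntx2 conjAx.
have cardGA : #|G| = (2 * #|A|)%N by rewrite cardG cardA mulnA.
have iAG : #|G : A| = 2 by rewrite -divgS // cardGA mulnK.
have notAx : x \notin A.
  apply/negP => Ax; have eqGA : G :=: A.
    by rewrite defG; apply/joing_idPl; rewrite cycle_subG.
  by move/eqP: cardGA; rewrite eqGA -{1}[#|A|]mul1n eqn_pmul2r.
have ntA : A :!=: 1 by apply/trivgPn; exists (x ^+ 2).
have Z2m_Z4E : #|A| = (2 * #|'C_A[x]|)%N <-> exists m, A \isog [set: Z2m_Z4 m].
  by rewrite (cent1A_Ldiv conjAx); apply: index2_Ldiv2_isog_Z2m_Z4.
split=> [notZ2m_Z4 | /Z2m_Z4E]; last exact: CDlattice_dic_Z2m_Z4.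
have neAW : #|A| != (2 * #|'C_A[x]|)%N.
  by apply/eqP => /Z2m_Z4E[m]; apply: notZ2m_Z4.
by case: (CDlattice_dic_chain cAA sAG iAG Gx notAx conjAx ntA neAW).
Qed.
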